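(* There exist a dynamical system $(X,T)$ which is non-proximal, not totally transitive and transitive compact, and a point $x_0\in X$ such that $\omega_{\mathcal{N}_T}(x_0)\neq\omega_T(x)$ for all $x\in X$.
   Context: A dynamical system $(X,T)$: $X$ is a compact metric space (metric $d$) with more than one point and without isolated points, $T:X\to X$ a continuous surjection. $(X,T)$ is proximal if $\liminf_{n\to\infty}d(T^nx,T^ny)=0$ for all $x,y\in X$. ''Opene'' means open and nonempty. $N_T(U,V)=\{n\in\mathbb{Z}_+:U\cap T^{-n}V\neq\varnothing\}$. $(X,T)$ is transitive if $N_T(U,V)\neq\varnothing$ for all opene $U,V$; totally transitive if $(X,T^k)$ is transitive for every $k\in\mathbb{N}$. $\mathcal{N}_T$ is the family of subsets of $\mathbb{Z}_+$ containing some $N_T(U,V)$ with $U,V$ opene; $\omega_{\mathcal{N}_T}(x)=\bigcap_{F\in\mathcal{N}_T}\overline{\{T^ix:i\in F\}}$; transitive compact means $\omega_{\mathcal{N}_T}(x)\neq\varnothing$ for all $x$. $\omega_T(x)=\bigcap_{n\ge1}\overline{\{T^kx:k\ge n\}}$. *)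

From HB Require Import structures.
From mathcomp Require Import all_boot all_order all_algebra.
From mathcomp Require Import all_classical all_reals all_analysis.
From mathcomp Require Import Rstruct Rstruct_topology.
From Stdlib Require Import Rdefinitions.

Set Implicit Arguments.
Unset Strict Implicit.
Unset Printing Implicit Defensive.

Import Order.TTheory GRing.Theory Num.Theory.
Local Open Scope classical_set_scope.
Local Open Scope ring_scope.

Section Dyn.
Variable X : metricType R.
Variable T : X -> X.

Definition dynamical_system : Prop :=
  [/\ compact [set: X],
      (exists a b : X, a <> b),
      (forall x : X, ~ open [set x]),
      continuous T &
      (forall y : X, exists x : X, T x = y)].

(* liminf_{n -> oo} d(T^n x, T^n y) = 0, unfolded (d >= 0) *)
Definition proximal : Prop :=
  forall x y : X, forall e : R, 0 < e -> forall N : nat,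
    exists2 n : nat, leq N n & mdist (iter n T x) (iter n T y) < e.

Definition opene (U : set X) : Prop := open U /\ U !=set0.

Definition N_T (U V : set X) : set nat :=
  [set n : nat | U `&` (iter n T @^-1` V) !=set0].

End Dyn.

Definition transitive (X : metricType R) (T : X -> X) : Prop :=
  forall U V : set X, opene U -> opene V -> N_T T U V !=set0.

Definition totally_transitive (X : metricType R) (T : X -> X) : Prop :=
  forall k : nat, leq 1 k -> transitive (iter k T).

Definition family_N (X : metricType R) (T : X -> X) (F : set nat) : Prop :=
  exists U V : set X, [/\ opene U, opene V & N_T T U V `<=` F].

Definition omega_N (X : metricType R) (T : X -> X) (x : X) : set X :=
  \bigcap_(F in family_N T) closure [set iter i T x | i in F].

Definition transitive_compact (X : metricType R) (T : X -> X) : Prop :=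
  forall x : X, omega_N T x !=set0.

Definition omega_T (X : metricType R) (T : X -> X) (x : X) : set X :=
  \bigcap_(n in [set n : nat | leq 1 n])
     closure [set iter k T x | k in [set k : nat | leq n k]].

(* The space is the shift on the 0-1 sequences whose switch times (the t with
   x t != x t.+1) all have the same parity and are sparse: a window of length m
   contains at most sqrt m of them.  Both conditions are closed and
   shift-invariant, so this is a compact subshift; the two constant sequences are
   fixed points, so it is not proximal, and the parity condition keeps T^2 from
   moving a sequence switching at 0 to one switching at 1.
   Sparseness forces arbitrarily long constant runs.  Any two cylinders can be
   glued with an arbitrarily late gap of the right parity, so if x has arbitrarily
   late long runs of c, then the constant c lies in omega_N(x); hence the system
   is transitive compact.
   The point x0 switches exactly at a fast-growing sequence of odd times, so both
   constants lie in omega_N(x0).  If omega_N(x0) = omega_T(x), then x takes both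
   values arbitrarily late, hence switches infinitely often, and omega_T(x)
   contains a point switching at 0.  That point is not in omega_N(x0): for the
   cylinder U of points switching at 0, N_T(U,U) contains only even times, while
   x0 switches only at odd times. *)

(* Imported before MathComp so that [^] on [nat] denotes [expn], not [Nat.pow]. *)
From Stdlib Require Import Rdefinitions.
From HB Require Import structures.
From mathcomp Require Import all_boot all_order all_algebra.
From mathcomp Require Import all_classical all_reals all_analysis.
From mathcomp Require Import Rstruct Rstruct_topology.
From mathcomp Require Import zify.

Set Implicit Arguments.
Unset Strict Implicit.
Unset Printing Implicit Defensive.

Import Order.TTheory GRing.Theory Num.Theory.
Local Open Scope classical_set_scope.

(** * Sparse switches of one parity *)

Section Switches.

Implicit Types (p q : pred nat) (x y u v : nat -> bool).

Definition switch x t : bool := x t != x t.+1.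

Definition sparse p := forall n m, count p (iota n m) ^ 2 <= m.

Definition same_parity p := forall i j, p i -> p j -> odd i = odd j.

Definition admissible x := sparse (switch x) /\ same_parity (switch x).

Lemma count_iota_window p Q R n m : (forall t, p t -> Q <= t < R) ->
  count p (iota n m) <= minn (n + m) R - maxn n Q.
Proof.
move=> pQR; rewrite -size_filter -(size_iota (maxn n Q) (minn (n + m) R - maxn n Q)).
apply: uniq_leq_size; first by rewrite filter_uniq ?iota_uniq.
move=> t; rewrite mem_filter => /andP[/pQR Qt]; rewrite !mem_iota; lia.
Qed.

Lemma sparse_sub p q : subpred p q -> sparse q -> sparse p.
Proof. by move=> pq sq n m; apply: leq_trans (sq n m); rewrite leq_sqr sub_count. Qed.

Lemma sparse_pred0 : sparse pred0.
Proof. by move=> n m; rewrite count_pred0. Qed.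

Lemma sparse_pred1 S : sparse (pred1 S).
Proof.
move=> n m; have := count_size (pred1 S) (iota n m); rewrite size_iota.
have S_win : forall t, pred1 S t -> S <= t < S.+1 by move=> t /eqP->; lia.
have := count_iota_window n m S_win; nia.
Qed.

Lemma sparseU p q P Q k : sparse p -> sparse q ->
  (forall t, p t -> t < P) -> (forall t, q t -> Q <= t < Q + k) ->
  (P + k) ^ 2 <= Q - P -> sparse (predU p q).
Proof.
move=> sp sq pP qQ gap n m; have := sp n m; have := sq n m.
have := count_predUI p q (iota n m).
have := @count_iota_window p 0 P n m pP; have := count_iota_window n m qQ.
(* A window meeting both [p] and [q] is longer than [Q - P >= (P + k) ^ 2]
   and contains at most [P + k] of their points. *)
case: (leqP (n + m) Q) => [|Qnm]; first nia.
case: (leqP P n) => [|nP]; nia.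
Qed.

Lemma same_parityP p : same_parity p -> exists r, forall t, p t -> odd t = r.
Proof.
move=> par; have [[t0 pt0]|none] := pselect (exists t, p t).
  by exists (odd t0) => t /par; apply.
by exists false => t pt; case: none; exists t.
Qed.

Lemma exists_parity_geq n (r : bool) : exists2 S, n <= S & odd S = r.
Proof. by exists (r + n.*2); rewrite ?oddD ?odd_double ?addbF //; lia. Qed.

Lemma admissible_sub x y : subpred (switch y) (switch x) -> admissible x -> admissible y.
Proof.
by move=> yx [sx px]; split=> [|i j /yx si /yx sj]; [apply: sparse_sub sx|apply: px].
Qed.

Lemma admissible_const (c : bool) : admissible (fun=> c).
Proof.
rewrite /admissible.
have -> : switch (fun=> c) = pred0 by apply: funext => t; rewrite /switch eqxx.
by split=> [|//]; apply: sparse_pred0.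
Qed.

Lemma admissible_of_prefixes x :
  (forall K, exists2 y, admissible y & forall t, t < K -> y t = x t) -> admissible x.
Proof.
move=> prefix; split=> [n m|i j].
  have [y [sy _] yx] := prefix (n + m).+1.
  rewrite -(@eq_in_count _ (switch y)); first exact: sy.
  by move=> t; rewrite mem_iota => /andP[_ tnm]; rewrite /switch !yx //; lia.
have [y [_ py] yx] := prefix (maxn i j).+2.
by rewrite /switch -!yx; [apply: py|lia..].
Qed.

Definition shiftl k x t := x (t + k).

Definition shiftr k x t := x (t - k).

Definition truncate K x t := x (minn t K).

Definition splice S (a b : nat -> bool) t := if t <= S then a t else b t.

Definition from_switches p t := odd (count p (iota 0 t)).

Lemma switch_shiftr k x t : switch (shiftr k x) t = (k <= t) && switch x (t - k).
Proof.
rewrite /switch /shiftr; case: leqP => [kt|tk]; first by rewrite subSn.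
have -> : t - k = 0 by lia.
have -> : t.+1 - k = 0 by lia.
by rewrite eqxx.
Qed.

Lemma switch_truncate K x t : switch (truncate K x) t = (t < K) && switch x t.
Proof.
rewrite /switch /truncate; case: ltnP => [tK|Kt].
  by rewrite (minn_idPl tK).
by rewrite (minn_idPr (leqW Kt)) eqxx.
Qed.

Lemma switch_splice S (a b : nat -> bool) t : switch (splice S a b) t ->
  switch a t || (t == S) || switch b t.
Proof.
rewrite /switch /splice; case: ltngtP => [tS|St|->]; rewrite ?eqxx ?orbT //.
all: by move=> ->; rewrite ?orbT.
Qed.

Lemma switch_from_switches p t : switch (from_switches p) t = p t.
Proof.
rewrite /switch /from_switches -addn1 iotaD count_cat /= addn0 oddD.
by case: (p t); rewrite ?addbT ?addbF ?negbK ?eqxx // eq_sym; case: odd.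
Qed.

Lemma admissible_shiftl k x : admissible x -> admissible (shiftl k x).
Proof.
move=> [sx px]; split=> [n m|i j].
  have -> : count (switch (shiftl k x)) (iota n m) = count (switch x) (iota (k + n) m).
    by rewrite iotaDl count_map; apply: eq_count => t; rewrite /= addnC.
  exact: sx.
by move=> /px /[apply]; rewrite !oddD => /addIb.
Qed.

Lemma admissible_shiftr k x : admissible x -> admissible (shiftr k x).
Proof.
move=> [sx px]; split=> [n m|i j]; last first.
  rewrite !switch_shiftr => /andP[ki si] /andP[kj sj].
  by have := px _ _ si sj; rewrite (oddB ki) (oddB kj) => /addIb.
apply: leq_trans (sx (n - k) m); rewrite leq_sqr -!size_filter.
rewrite -(size_map (subn^~ k)); apply: uniq_leq_size.
  rewrite map_inj_in_uniq ?filter_uniq ?iota_uniq // => s t.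
  by rewrite !mem_filter !switch_shiftr => /andP[/andP[ks _] _] /andP[/andP[kt _] _]; lia.
move=> s /mapP[t]; rewrite !mem_filter !mem_iota switch_shiftr.
by move=> /andP[/andP[kt swt] nt] ->; rewrite swt /=; lia.
Qed.

Lemma admissible_truncate K x : admissible x -> admissible (truncate K x).
Proof. by apply: admissible_sub => t; rewrite switch_truncate => /andP[]. Qed.

Lemma admissible_splice (a b : nat -> bool) S P Q k :
  admissible a -> admissible b ->
  (forall t, switch a t -> t < P /\ odd t = odd S) ->
  (forall t, switch b t -> Q <= t < Q + k /\ odd t = odd S) ->
  (P + 1) ^ 2 <= S - P -> (S.+1 + k) ^ 2 <= Q - S.+1 ->
  admissible (splice S a b).
Proof.
move=> [sa _] [sb _] aP bQ gapS gapQ.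
have sw := @switch_splice S a b.
split=> [|i j]; last first.
  have par t : switch (splice S a b) t -> odd t = odd S.
    by move/sw/orP=> [/orP[/aP[]|/eqP->]|/bQ[]].
  by move=> /par -> /par ->.
apply: (sparse_sub sw); apply: (sparseU (P := S.+1) (Q := Q) (k := k)) => //.
- apply: (sparseU (P := P) (Q := S) (k := 1)) => //; first exact: sparse_pred1.
    by move=> t /aP[].
  by move=> t /eqP->; lia.
- by move=> t /orP[/aP[]|/eqP->]; nia.
- by move=> t /bQ[].
Qed.

Lemma admissible_from_switches p : sparse p -> same_parity p -> admissible (from_switches p).
Proof.
rewrite /admissible (_ : switch (from_switches p) = p) //.
by apply: funext => t; apply: switch_from_switches.
Qed.

Lemma admissible_perturb x K : admissible x ->
  exists2 y, admissible y & (forall t, t <= K -> y t = x t) /\ y <> x.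
Proof.
move=> adx; pose a := truncate K.+1 x; pose y S := splice S a (fun=> ~~ x K.+1).
have [r ar] := same_parityP (admissible_truncate K.+1 adx).2.
have [S KS oddS] := exists_parity_geq (K.+1 + K.+2 ^ 2) r.
have ady S' : K.+1 + K.+2 ^ 2 <= S' -> odd S' = r -> admissible (y S').
  move=> KS' oddS'.
  apply: (admissible_splice (P := K.+1) (Q := S'.+1 ^ 2 + S'.+1) (k := 0)) => //.
  - exact: admissible_truncate.
  - exact: admissible_const.
  - move=> t swt; rewrite oddS' -(ar t swt).
    by move: swt; rewrite switch_truncate => /andP[].
  - by move=> t; rewrite /switch eqxx.
  - lia.
  - lia.
have yx S' t : K < S' -> t <= K -> y S' t = x t.
  by move=> KS' tK; rewrite /y /splice ifT /a /truncate ?(minn_idPl _) //; lia.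
have yS : y S S.+1 != y S.+2 S.+1.
  by rewrite /y /splice ltnn ltnW // /a /truncate (minn_idPr _) ?negbK //; lia.
(* The candidates [y S] and [y S.+2] differ, so one of them differs from [x]. *)
case: (eqVneq (y S) x) => [ySx|ySx].
  exists (y S.+2); first by apply: ady; rewrite //= ?negbK; lia.
  by split=> [t|yS2x]; [apply: yx; lia|move: yS; rewrite ySx yS2x eqxx].
by exists (y S); [apply: ady|split=> [t|]; [apply: yx; lia|apply/eqP]].
Qed.

Lemma admissible_glue u v K : admissible u -> admissible v ->
  exists B r, forall n, B <= n -> odd n = r ->
  exists2 w, admissible w & forall t, t < K -> w t = u t /\ w (n + t) = v t.
Proof.
move=> adu adv.
have [ru hru] := same_parityP (admissible_truncate K adu).2.
have [rv hrv] := same_parityP (admissible_truncate K adv).2.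
have [S KS oddS] := exists_parity_geq (K + K.+1 ^ 2) ru.
exists (S.+1 + (S.+1 + K) ^ 2), (ru (+) rv) => n Bn oddn.
exists (splice S (truncate K u) (shiftr n (truncate K v))).
  apply: (admissible_splice (P := K) (Q := n) (k := K)).
  - exact: admissible_truncate.
  - exact/admissible_shiftr/admissible_truncate.
  - move=> t swt; rewrite oddS -(hru t swt).
    by move: swt; rewrite switch_truncate => /andP[].
  - move=> t; rewrite switch_shiftr => /andP[nt swt]; have := hrv _ swt.
    move: swt; rewrite switch_truncate (oddB nt) oddn oddS => /andP[tK _] odd_t.
    by split; [lia|move: odd_t; case: (odd t); case: (ru); case: (rv)].
  - lia.
  - lia.
move=> t tK; rewrite /splice /shiftr /truncate ifT ?ifF ?(minn_idPl _) ?addKn //; lia.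
Qed.

Definition long_runs x (c : bool) :=
  forall L n, exists2 a, n <= a & forall i, i <= L -> x (a + i) = c.

Lemma run_of_no_switch x a L : (forall i, i < L -> ~~ switch x (a + i)) ->
  forall i, i <= L -> x (a + i) = x a.
Proof.
move=> no_switch; elim=> [|i IH] iL; first by rewrite addn0.
rewrite addnS -IH ?(ltnW iL) //; apply/esym/eqP.
by move: (no_switch i iL); rewrite negbK.
Qed.

Lemma exists_switch x a b : a <= b -> x a != x b -> exists2 t, a <= t < b & switch x t.
Proof.
move=> ab xab; have [//|no_switch] := pselect (exists2 t, a <= t < b & switch x t).
have no_switch' i : i < b - a -> ~~ switch x (a + i).
  by move=> iba; apply/negP => swi; apply: no_switch; exists (a + i) => //; lia.
by move: xab; rewrite -(subnKC ab) (run_of_no_switch no_switch') ?eqxx.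
Qed.

Lemma late_switches x : (forall c n, exists2 t, n < t & x t = c) ->
  forall n, exists2 t, n <= t & switch x t.
Proof.
move=> late n; have [k nk xk] := late false n; have [l nl xl] := late true n.
have [a [b [ab na xab]]] : exists a b, [/\ a <= b, n <= a & x a != x b].
  by case: (leqP k l) => kl; [exists k, l|exists l, k]; rewrite xk xl; split=> //; lia.
have [t /andP[ta _] xt] := exists_switch ab xab.
by exists t => //; lia.
Qed.

Lemma count_iota_gap p n L s : count p (iota n (s.+1 * L)) <= s ->
  exists2 a, n <= a & count p (iota a L) = 0.
Proof.
elim: s n => [|s IH] n; first by rewrite mul1n leqn0 => /eqP; exists n.
rewrite mulSn iotaD count_cat => cnt.
have [c0|c_pos] := eqVneq (count p (iota n L)) 0; first by exists n.
have [|a na ca] := IH (n + L); first lia.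
by exists a => //; lia.
Qed.

Lemma sparse_gap p L n : sparse p ->
  exists2 a, n <= a & forall i, i < L -> ~~ p (a + i).
Proof.
move=> sp; have := sp n ((L + L).+1 * L) => cnt.
have [|a na ca] := @count_iota_gap p n L (L + L); first nia.
exists a => // i iL; move/eqP: ca; rewrite -leqn0 leqNgt -has_count => /hasPn; apply.
by rewrite mem_iota; lia.
Qed.

Lemma admissible_long_runs x : admissible x -> exists c, long_runs x c.
Proof.
move=> [sx _].
have const_run L n : exists2 a, n <= a & forall i, i <= L -> x (a + i) = x a.
  by have [a na gap] := sparse_gap L n sx; exists a => //; apply: run_of_no_switch.
have [runs_false|] := pselect (long_runs x false); first by exists false.
move=> /existsNP[L0 /existsNP[n0 no_run]].
exists true => L n; have [a na run] := const_run (maxn L L0) (maxn n n0).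
have xa : x a.
  apply/negPn/negP => /negbTE xa; apply: no_run; exists a => [|i iL0]; first lia.
  by rewrite run ?xa //; lia.
by exists a => [|i iL]; [lia|rewrite run //; lia].
Qed.

(** * A sequence switching at fast-growing odd times *)

Fixpoint switch_time k := if k is k'.+1 then (switch_time k').+2 ^ 2 * 2 + 1 else 1.

Lemma odd_switch_time k : odd (switch_time k).
Proof. by case: k => //= k; rewrite addn1 /= muln2 odd_double. Qed.

Lemma switch_time_gap k : (switch_time k).+1 + (switch_time k).+2 ^ 2 <= switch_time k.+1.
Proof. by rewrite /=; nia. Qed.

Lemma leq_switch_time : {mono switch_time : j k / j <= k}.
Proof. by apply/leq_mono/(homo_ltn ltn_trans) => k; have := switch_time_gap k; lia. Qed.

Lemma switch_time_gt k : k < switch_time k.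
Proof. by elim: k => // k IH; have := switch_time_gap k; lia. Qed.

Definition stage_switches k t := t \in map switch_time (iota 0 k).

Lemma stage_switchesP k t :
  reflect (exists2 j, j < k & t = switch_time j) (stage_switches k t).
Proof.
apply: (iffP mapP) => -[j jk ->]; exists j => //; first by rewrite mem_iota in jk.
by rewrite mem_iota.
Qed.

Lemma stage_switches_max k t : stage_switches k.+1 t -> t <= switch_time k.
Proof. by move=> /stage_switchesP[j jk ->]; rewrite leq_switch_time. Qed.

Lemma sparse_stage_switches k : sparse (stage_switches k).
Proof.
elim: k => [|k sk]; first by apply: sparse_sub sparse_pred0 => t /stage_switchesP[].
apply: (sparse_sub (q := predU (stage_switches k) (pred1 (switch_time k)))).
  by move=> t; rewrite /stage_switches -addn1 iotaD map_cat mem_cat /= inE.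
case: k sk => [|k] sk.
  apply: (sparseU (P := 0) (Q := switch_time 0) (k := 1)) => //; first exact: sparse_pred1.
  by move=> t /eqP->.
apply: (sparseU (P := (switch_time k).+1) (Q := switch_time k.+1) (k := 1)) => //.
- exact: sparse_pred1.
- by move=> t /stage_switches_max.
- by move=> t /eqP->; lia.
- by have := switch_time_gap k; lia.
Qed.

(* [t = switch_time j] forces [j < t], so stage [t] already decides [t]. *)
Definition x0_switches t := stage_switches t t.

Lemma x0_switches_stage K t : t <= K -> x0_switches t = stage_switches K t.
Proof.
move=> tK; apply/stage_switchesP/stage_switchesP => -[j jlt tE]; exists j => //; first lia.
by rewrite tE switch_time_gt.
Qed.

Definition x0_seq := from_switches x0_switches.

Lemma odd_x0_switches t : x0_switches t -> odd t.
Proof. by move=> /stage_switchesP[j _ ->]; apply: odd_switch_time. Qed.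

Lemma admissible_x0_seq : admissible x0_seq.
Proof.
apply: admissible_from_switches => [n m|i j /odd_x0_switches-> /odd_x0_switches-> //].
rewrite (@eq_in_count _ _ (stage_switches (n + m))); first exact: sparse_stage_switches.
by move=> t; rewrite mem_iota => /andP[_ tnm]; apply: x0_switches_stage; lia.
Qed.

Lemma long_runs_x0_seq c : long_runs x0_seq c.
Proof.
have run k i : i <= switch_time k.+1 - (switch_time k).+1 ->
    x0_seq ((switch_time k).+1 + i) = x0_seq (switch_time k).+1.
  apply: run_of_no_switch => {}i ilt; rewrite switch_from_switches.
  apply/negP => /stage_switchesP[j _ E].
  case: (leqP j k) => jk; first by have := leq_switch_time j k; rewrite jk; lia.
  by have := leq_switch_time k.+1 j; rewrite jk; lia.
have switch_at k : x0_seq (switch_time k) != x0_seq (switch_time k).+1.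
  rewrite -/(switch _ _) switch_from_switches.
  by apply/stage_switchesP; exists k => //; apply: switch_time_gt.
move=> L n; pose k := n + L.
have gap0 := switch_time_gap k; have gap1 := switch_time_gap k.+1.
have gtk := switch_time_gt k.
have e0 : x0_seq (switch_time k.+1) = x0_seq (switch_time k).+1.
  by rewrite -(run k (switch_time k.+1 - (switch_time k).+1)) ?subnKC //; lia.
(* The runs following [switch_time k] and [switch_time k.+1] have different
   values, so one of them is a run of [c]. *)
case: (eqVneq (x0_seq (switch_time k).+1) c) => [e1|ne1].
  by exists (switch_time k).+1 => [|i iL]; [lia|rewrite run -?e1 //; lia].
exists (switch_time k.+1).+1 => [|i iL]; first lia.
rewrite run; last lia.
by move: (switch_at k.+1) ne1; rewrite e0; case: (x0_seq _) => /=; case: (x0_seq _); case: c.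
Qed.

End Switches.

(** * The shift space *)

Record point := Point { bits :> nat -> bool; bitsP : admissible bits }.

HB.instance Definition _ := gen_eqMixin point.
HB.instance Definition _ := gen_choiceMixin point.

Lemma point_ext (x y : point) : x =1 y -> x = y.
Proof.
case: x y => [x adx] [y ady] /= /funext xy; subst y.
by rewrite (Prop_irrelevance adx ady).
Qed.

Definition cylinder (x : point) K : set point := [set y | forall i, i <= K -> y i = x i].

Local Open Scope ring_scope.

Definition dist (x y : point) : R :=
  if pselect (exists n, x n != y n) is left diff then (ex_minn diff).+1%:R^-1 else 0.

Lemma dist_ge0 (x y : point) : 0 <= dist x y.
Proof. by rewrite /dist; case: pselect => // diff; rewrite invr_ge0 ler0n. Qed.

Lemma cylinder_dist (x y : point) K : cylinder x K y <-> dist x y < K.+1%:R^-1.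
Proof.
rewrite /dist; case: pselect => [diff|same]; last first.
  split=> [_|_ i _]; first by rewrite invr_gt0 ltr0Sn.
  by apply/eqP/negPn/negP => yx; apply: same; exists i; rewrite eq_sym.
case: ex_minnP => m xym minm; rewrite ltf_pV2 ?posrE ?ltr0Sn // ltr_nat ltnS.
split=> [yx|Km i iK]; first by rewrite ltnNge; apply: contra xym => mK; rewrite yx.
by apply/eqP/negPn/negP; rewrite eq_sym => /minm; lia.
Qed.

Lemma dist_xx (x : point) : dist x x = 0.
Proof. by rewrite /dist; case: pselect => // diff; have [n] := diff; rewrite eqxx. Qed.

Lemma dist_eq0 (x y : point) : dist x y = 0 -> x = y.
Proof.
rewrite /dist; case: pselect => [diff|same]; first by move/eqP; rewrite invr_eq0 pnatr_eq0.
by move=> _; apply: point_ext => t; apply/eqP/negPn/negP => xy; apply: same; exists t.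
Qed.

Lemma distC (x y : point) : dist x y = dist y x.
Proof.
rewrite /dist; case: pselect => [dxy|nxy]; case: pselect => [dyx|nyx] //.
- congr (_.+1%:R^-1); apply/eqP; rewrite eqn_leq.
  case: ex_minnP => m xym minm; case: ex_minnP => m' yxm minm'.
  by rewrite minm ?minm' // eq_sym.
- by case: nyx; case: dxy => n; exists n; rewrite eq_sym.
- by case: nxy; case: dyx => n; exists n; rewrite eq_sym.
Qed.

Lemma dist_triangle (y x z : point) : dist x z <= dist x y + dist y z.
Proof.
rewrite {1}/dist; case: pselect => [diff|_]; last by rewrite addr_ge0 ?dist_ge0.
case: ex_minnP => m xzm _.
have [xym|/cylinder_dist xy] := leP m.+1%:R^-1 (dist x y).
  by rewrite (le_trans xym) // lerDl dist_ge0.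
have [yzm|/cylinder_dist yz] := leP m.+1%:R^-1 (dist y z).
  by rewrite (le_trans yzm) // lerDr dist_ge0.
by move: xzm; rewrite -(xy m) // (yz m) // eqxx.
Qed.

HB.instance Definition _ := @isMetric.Build R point dist dist_xx dist_eq0 distC dist_triangle.

Lemma nbhs_cylinderP (x : point) (A : set point) :
  nbhs x A <-> exists K, cylinder x K `<=` A.
Proof.
split=> [/nbhs_ballP[e /= e0 xeA]|[K xKA]].
  exists (Num.Def.trunc e^-1) => y /cylinder_dist xy; apply: xeA.
  rewrite ballEmdist /=; apply: lt_trans xy _.
  by rewrite -[e in _ < e]invrK ltf_pV2 ?posrE ?invr_gt0 ?ltr0Sn ?truncnS_gt.
apply/nbhs_ballP; exists K.+1%:R^-1; first by rewrite /= invr_gt0 ltr0Sn.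
by move=> y; rewrite ballEmdist => /cylinder_dist; apply: xKA.
Qed.

Lemma nbhs_cylinder (x : point) K : nbhs x (cylinder x K).
Proof. by apply/nbhs_cylinderP; exists K. Qed.

Local Close Scope ring_scope.

Definition shift (x : point) : point := Point (admissible_shiftl 1 (bitsP x)).

Lemma iter_shiftE n (x : point) t : iter n shift x t = x (t + n).
Proof.
elim: n t => [|n IH] t; first by rewrite addn0.
by rewrite iterS /= /shiftl IH; congr (x _); lia.
Qed.

Definition const_point (c : bool) : point := Point (admissible_const c).

Lemma compact_point : compact [set: point].
Proof.
rewrite compact_ultra => F FU _.
pose z n := `[< F [set y : point | y n] >].
have Fz n : F [set y : point | y n = z n].
  rewrite /z; case: asboolP => [Fn|nFn]; first by apply: filterS Fn => y /= ->.
  have [//|Fc] := in_ultra_setVsetC [set y : point | y n] FU.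
  by apply: filterS Fc => y /= /negP/negbTE.
have Fcyl K : F [set y : point | forall i, i <= K -> y i = z i].
  elim: K => [|K IH]; first by apply: filterS (Fz 0) => y yz [|].
  apply: filterS (filterI IH (Fz K.+1)) => y [yzK yzK1] i.
  by rewrite leq_eqVlt => /orP[/eqP->|]; [|apply: yzK].
have adz : admissible z.
  apply: admissible_of_prefixes => K; have [y yz] := filter_ex (Fcyl K).
  by exists y => [|t tK]; [apply: bitsP|apply: yz; lia].
exists (Point adz); split=> // A /nbhs_cylinderP[K zKA].
by apply: filterS (Fcyl K) => y yz; apply: zKA.
Qed.

(** * Dynamics of the shift *)

Lemma dynamical_system_shift : dynamical_system shift.
Proof.
split.
- exact: compact_point.
- by exists (const_point false), (const_point true) => /(congr1 (fun z : point => z 0)).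
- move=> x; rewrite openE => /(_ x erefl)/nbhs_cylinderP[K xK].
  have [y ady [yx yNx]] := admissible_perturb K (bitsP x).
  by apply: yNx; have /= <- := xK (Point ady) yx.
- move=> x A /nbhs_cylinderP[K xKA]; apply/nbhs_cylinderP; exists K.+1 => y xy.
  by apply: xKA => i iK /=; rewrite /shiftl xy //; lia.
- move=> y; exists (Point (admissible_shiftr 1 (bitsP y))).
  by apply: point_ext => t /=; rewrite /shiftl /shiftr addnK.
Qed.

Lemma not_proximal_shift : ~ proximal shift.
Proof.
move=> /(_ (const_point false) (const_point true) 1%R ltr01 0) [n _].
rewrite -[X in (_ < X)%R]invr1 -[X in (_ < X^-1)%R]mulr1n.
by move=> /cylinder_dist/(_ 0 (leqnn 0)); rewrite !iter_shiftE.
Qed.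

Definition switch_set i : set point := [set y | switch y i].

Lemma opene_switch_set i : opene (switch_set i).
Proof.
split.
  rewrite openE => x xi; apply/nbhs_cylinderP; exists i.+1 => y xy.
  by rewrite /switch_set /= /switch !xy.
have ad1 : admissible (from_switches (pred1 i)).
  by apply: admissible_from_switches => [|j k /eqP-> /eqP->]; [apply: sparse_pred1|].
by exists (Point ad1); rewrite /switch_set /= switch_from_switches /=.
Qed.

Lemma not_totally_transitive_shift : ~ totally_transitive shift.
Proof.
move=> /(_ 2 isT _ _ (opene_switch_set 0) (opene_switch_set 1)) [n [w [w0]]].
rewrite /switch_set /= -iterM /switch !iter_shiftE => w1.
by have := (bitsP w).2 _ _ w0 w1; rewrite oddD oddM andbF.
Qed.

Lemma omega_N_const (x : point) c : long_runs x c -> omega_N shift x (const_point c).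
Proof.
move=> runs F [U [V [[oU [u Uu]] [oV [v Vv]] UVF]]] B /nbhs_cylinderP[K cB].
have /nbhs_cylinderP[KU uU] := oU u Uu; have /nbhs_cylinderP[KV vV] := oV v Vv.
have [Bn [r glue]] := admissible_glue (maxn KU KV).+1 (bitsP u) (bitsP v).
have [a Bna run] := runs K.+1 Bn.
pose n := a + (odd a (+) r).
have odd_n : odd n = r by rewrite oddD oddb addbA addbb.
have [w adw wuv] := glue n (leq_trans Bna (leq_addr _ _)) odd_n.
exists (iter n shift x); split.
  exists n => //; apply: UVF; exists (Point adw); split.
    by apply: uU => i iK /=; have [|-> _] // := wuv i; lia.
  by apply: vV => i iK; rewrite iter_shiftE addnC /=; have [|_ ->] // := wuv i; lia.
by apply: cB => i iK; rewrite iter_shiftE addnC -addnA run //; case: (_ (+) _) => /=; lia.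
Qed.

Lemma transitive_compact_shift : transitive_compact shift.
Proof.
move=> x; have [c runs] := admissible_long_runs (bitsP x).
by exists (const_point c); apply: omega_N_const.
Qed.

Definition x0 : point := Point admissible_x0_seq.

Lemma switch_notin_omega_N_x0 (z : point) : switch z 0 -> ~ omega_N shift x0 z.
Proof.
move=> z0 zx0.
have F : family_N shift (N_T shift (switch_set 0) (switch_set 0)).
  by exists (switch_set 0), (switch_set 0); split=> //; apply: opene_switch_set.
have [_ [[n [w [w0 wn]] <-] zn]] := zx0 _ F _ (nbhs_cylinder z 1).
move: wn; rewrite /switch_set /= /switch !iter_shiftE add0n add1n => wn.
have : switch x0 n by rewrite /switch -(iter_shiftE n x0 0) -(iter_shiftE n x0 1) !zn.
rewrite /= /x0_seq switch_from_switches => /odd_x0_switches.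
by rewrite -((bitsP w).2 _ _ w0 wn).
Qed.

Lemma exists_omega_T_switch0 (x : point) : (forall n, exists2 t, n <= t & switch x t) ->
  exists2 z, omega_T shift x z & switch z 0.
Proof.
move=> late.
pose B n := [set iter k shift x | k in [set k | n <= k /\ switch x k]].
have B_proper : ProperFilter (filter_from setT B).
  apply: filter_from_proper; last first.
    by move=> n _; have [t nt xt] := late n; exists (iter t shift x), t.
  apply: filter_fromT_filter; first by exists 0.
  move=> i j; exists (maxn i j) => _ [k [ijk xk] <-].
  by split; exists k => //; split=> //; lia.
(* [z] is a cluster point of the orbit of [x] along its switch times. *)
have [z [_ zB]] := compact_point B_proper filterT.
have B_mem n : filter_from setT B (B n) by exists n.
exists z.
  move=> n _ C zC; have [_ [[k [nk _] <-] Ck]] := zB (B n) C (B_mem n) zC.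
  by exists (iter k shift x); split=> //; exists k.
have [_ [[k [_ xk] <-] zk]] := zB (B 0) _ (B_mem 0) (nbhs_cylinder z 1).
by move: xk; rewrite /switch -(iter_shiftE k x 0) -(iter_shiftE k x 1) !zk.
Qed.

Lemma omega_N_x0_neq_omega_T (x : point) : omega_N shift x0 <> omega_T shift x.
Proof.
move=> E.
have late_value c n : exists2 k, n < k & x k = c.
  have : omega_T shift x (const_point c) by rewrite -E; apply/omega_N_const/long_runs_x0_seq.
  move=> /(_ n.+1 isT _ (nbhs_cylinder _ 0)) [_ [[k nk <-] xk]].
  by exists k => //; move: (xk 0 (leqnn 0)); rewrite iter_shiftE add0n.
have [z zT z0] := exists_omega_T_switch0 (late_switches late_value).
by apply: switch_notin_omega_N_x0 z0 _; rewrite E.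
Qed.

Theorem corollary6p5 :
  exists (X : metricType R) (T : X -> X),
    [/\ dynamical_system T,
        ~ proximal T,
        ~ totally_transitive T,
        transitive_compact T &
        exists x0 : X, forall x : X, omega_N T x0 <> omega_T T x].
Proof.
exists point, shift; split.
- exact: dynamical_system_shift.
- exact: not_proximal_shift.
- exact: not_totally_transitive_shift.
- exact: transitive_compact_shift.
- by exists x0; apply: omega_N_x0_neq_omega_T.
Qed.
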